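(* Let $n\ge2$ and $u\in\mathfrak D_n$. If either ($u(1)=1$ and $u(k)>0$ for all $1\le k\le n$) or ($u(1)<-1$, $u^{-1}(1)<-1$, and $|\{1\le i\le n: u(i)<0\}|=2$), then $$C(u)=\{t_1\}\cup\{t_i: i\ne1,\ |u(j)|<u(k)\text{ for all }0\le j\le i<k\le n\};$$ otherwise $$C(u)=\{t_i: i\ne1,\ |u(j)|<u(k)\text{ for all }0\le j\le i<k\le n\},$$ where $u(0)=0$ by convention and $i$ ranges over $\{0,1,\dots,n-1\}$.
   Context: $\mathfrak B_n$ is the group of signed permutations of $\{\pm1,\dots,\pm n\}$ ($w(-i)=-w(i)$), with $\tau_0=(-1,1)$ and $\tau_i=(i,i+1)(-i,-i-1)$ for $1\le i\le n-1$. For $n\ge2$, $\mathfrak D_n$ is the subgroup of $\mathfrak B_n$ (of order $2^{n-1}n!$) generated by $t_0=\tau_0\tau_1\tau_0$ (so $t_0(1)=-2$, $t_0(2)=-1$) and $t_i=\tau_i$ for $1\le i\le n-1$; it is a Coxeter group with generators $S=\{t_0,\dots,t_{n-1}\}$. For $w\in\mathfrak D_n$, $S(w)$ is the set of generators appearing in a (any) reduced expression of $w$ in $\mathfrak D_n$, and $C(w)=S\setminus S(w)$. *)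

From mathcomp Require Import all_boot all_order all_algebra.
Set Implicit Arguments. Unset Strict Implicit. Unset Printing Implicit Defensive.
Import Order.TTheory GRing.Theory Num.Theory.
Local Open Scope ring_scope.

(* Signed permutations of {±1..±n} are modelled as maps int -> int fixing
   every integer outside {±1..±n} (in particular 0, matching u(0)=0).
   Generator t_i of D_n (i : 'I_n, i = 0..n-1):
     t_0 = tau_0 tau_1 tau_0 : 1 <-> -2, 2 <-> -1
     t_i = (i,i+1)(-i,-i-1)  for 1 <= i <= n-1. *)
Definition Dgen (n : nat) (i : 'I_n) (x : int) : int :=
  if val i == 0%N then
    (if x == 1 then -2 else if x == 2 then -1
     else if x == -1 then 2 else if x == -2 then 1 else x)
  else
    let a := (val i)%:Z in
    if x == a then a + 1 else if x == a + 1 then a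
    else if x == - a then - a - 1 else if x == - a - 1 then - a else x.

Definition Deval (n : nat) (w : seq 'I_n) : int -> int :=
  foldr (fun i f => Dgen i \o f) id w.

Definition inDn (n : nat) (u : int -> int) : Prop :=
  exists w : seq 'I_n, forall x, Deval w x = u x.

Definition reduced_expr (n : nat) (w : seq 'I_n) (u : int -> int) : Prop :=
  (forall x, Deval w x = u x) /\
  (forall w' : seq 'I_n, (forall x, Deval w' x = u x) -> (size w <= size w')%N).

Definition inS (n : nat) (u : int -> int) (i : 'I_n) : Prop :=
  exists w : seq 'I_n, reduced_expr w u /\ i \in w.

Definition inC (n : nat) (u : int -> int) (i : 'I_n) : Prop := ~ inS u i.

From mathcomp Require Import all_boot all_order all_algebra zify.
From Stdlib Require Import FunctionalExtensionality.
Set Implicit Arguments. Unset Strict Implicit. Unset Printing Implicit Defensive.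
Import Order.TTheory GRing.Theory Num.Theory.
Local Open Scope ring_scope.

(* Every element u of D_n is an even signed permutation, and its Coxeter length
   is the type-D inversion number [len u] of its window [u 1; ...; u n].
   Right multiplication by t_j changes this number by exactly one, increasing
   it iff j is an ascent; so a word of length [len u] exists, no word is
   shorter, and the reduced words are the words of that length.
   If t_i occurs in no reduced word, u lies in the standard parabolic subgroup
   W_i generated by S \ {t_i}.  Conversely, if u lies in W_i and a reduced word
   of u is a t_i b with t_i not in b, then v = u b^-1 = a t_i lies in W_i, so
   t_i is an ascent of v and len a = len v + 1; hence
   len u <= len v + |b| < |a| + 1 + |b|, a contradiction.
   Membership in W_i is the condition X i for i <> 1; for i = 1 it says that
   tau0 u tau0 is unsigned, which unfolds into the two alternatives. *)

Ltac split_eqs :=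
  repeat match goal with |- context[?a == ?b] =>
    lazymatch a with context[if _ then _ else _] => fail | _ =>
    lazymatch b with context[if _ then _ else _] => fail | _ =>
      case: (a =P b) => ? end end end.

Ltac Dgen_cases := rewrite /Dgen; split_eqs; try lia.

Ltac split_lts :=
  repeat match goal with |- context[(?a < ?b)%R] => case: (ltP a b) => ? end;
  cbn [nat_of_bool negb].

Definition dinv_pair (p q : int) : nat := ((q < p)%R + (p + q < 0)%R)%N.

(* #{i < j | s_i > s_j} + #{i < j | s_i + s_j < 0}: on windows this is the
   Coxeter length of D_n (Bjorner-Brenti, Combinatorics of Coxeter Groups, 8.2). *)
Fixpoint dinv (s : seq int) : nat :=
  if s is p :: r then (sumn (map (dinv_pair p) r) + dinv r)%N else 0%N.

Lemma dinv_swap l p q r :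
  (dinv (l ++ p :: q :: r) + (p < q)%R)%N = (dinv (l ++ q :: p :: r) + (q < p)%R)%N.
Proof.
elim: l => [|c l IH] /=; first by rewrite /dinv_pair (addrC q p); lia.
by rewrite !map_cat !sumn_cat /=; lia.
Qed.

Lemma dinv_flip p q r :
  (dinv (p :: q :: r) + (0 < p + q)%R)%N = (dinv (- q :: - p :: r) + (p + q < 0)%R)%N.
Proof.
have flip c : (dinv_pair (- q) c + dinv_pair (- p) c = dinv_pair p c + dinv_pair q c)%N.
  by rewrite /dinv_pair; split_lts; lia.
have sum_flip : (sumn (map (dinv_pair (- q)) r) + sumn (map (dinv_pair (- p)) r) =
                 sumn (map (dinv_pair p) r) + sumn (map (dinv_pair q) r))%N.
  by elim: r => [|c r IH] //=; have := flip c; lia.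
by move: sum_flip; rewrite /= /dinv_pair; split_lts; lia.
Qed.

Lemma dinv_increasing (s : seq nat) :
  sorted ltn s -> ~~ (0%N \in s) -> dinv (map Posz s) = 0%N.
Proof.
elim: s => [|a s IH] //= s_sorted; rewrite inE negb_or => /andP[a_gt0 s_pos].
rewrite IH ?(path_sorted s_sorted) // addn0.
have : all (ltn a) s := order_path_min ltn_trans s_sorted.
elim: s {IH s_sorted s_pos} => [|b s IH] //= /andP[ab /IH ->].
by rewrite /dinv_pair; split_lts; lia.
Qed.

Lemma increasing_id (f : nat -> int) (m : nat) :
  (forall k, (1 <= k < m)%N -> f k < f k.+1) -> 1 <= f 1%N -> f m <= m%:Z ->
  forall k, (1 <= k <= m)%N -> f k = k%:Z.
Proof.
move=> f_incr f1 fm.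
have lower k : (1 <= k <= m)%N -> k%:Z <= f k.
  elim: k => [|k IH] hk; first lia.
  case: k IH hk => [|k] IH hk; first lia.
  have := f_incr k.+1; have := IH; lia.
have upper d : (d < m)%N -> f (m - d)%N <= (m - d)%N%:Z.
  elim: d => [|d IH] hd; first by rewrite subn0.
  have := f_incr (m - d.+1)%N; have -> : (m - d.+1).+1 = (m - d)%N by lia.
  have := IH; lia.
move=> k hk; have := upper (m - k)%N; rewrite subKn; [have := lower k hk|]; lia.
Qed.

Lemma mem_split_last (T : eqType) (a : T) (s : seq T) :
  a \in s -> exists s1 s2, s = s1 ++ a :: s2 /\ a \notin s2.
Proof.
elim: s => [|b s IH] //; rewrite in_cons.
have [a_in_s _|a_notin_s] := boolP (a \in s).
  by have [s1 [s2 [-> a_notin]]] := IH a_in_s; exists (b :: s1), s2.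
by rewrite orbF => /eqP <-; exists [::], s.
Qed.

Section EvenSignedPermutations.

Variable n : nat.
Hypothesis n_ge2 : (2 <= n)%N.

Implicit Types (x : int -> int) (i j : 'I_n) (w : seq 'I_n).

Lemma Dgen_opp j y : Dgen j (- y) = - Dgen j y.
Proof. by Dgen_cases. Qed.

Lemma Dgen_inv j : involutive (Dgen j).
Proof. by move=> y; Dgen_cases. Qed.

Lemma Dgen_out j y : n%:Z < y -> Dgen j y = y.
Proof. by have j_lt : (val j < n)%N := ltn_ord j; Dgen_cases. Qed.

Lemma Dgen_norm j y : `|y| <= n%:Z -> `|Dgen j y| <= n%:Z.
Proof. by have j_lt : (val j < n)%N := ltn_ord j; Dgen_cases. Qed.

Lemma Deval_rcons w j : Deval (rcons w j) = Deval w \o Dgen j.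
Proof. by elim: w => //= a w ->. Qed.

Lemma Deval_cat w w' : Deval (w ++ w') = Deval w \o Deval w'.
Proof. by elim: w => //= a w ->. Qed.

Lemma Deval_revK w : cancel (Deval (rev w)) (Deval w).
Proof.
elim: w => [|a w IH] y //.
by rewrite rev_cons Deval_rcons /= IH Dgen_inv.
Qed.

Definition window x := [seq x k%:Z | k <- iota 1 n].

Record even_signed_perm x : Prop := {
  esp_odd : forall y, x (- y) = - x y;
  esp_out : forall y, n%:Z < y -> x y = y;
  esp_norm : forall y, `|y| <= n%:Z -> `|x y| <= n%:Z;
  esp_bij : bijective x;
  esp_even : ~~ odd (count (fun v => v < 0) (window x)) }.

Lemma esp_inj x : even_signed_perm x -> injective x.
Proof. by case=> _ _ _ /bij_inj. Qed.

Lemma esp0 x : even_signed_perm x -> x 0 = 0.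
Proof. move=> ex; have : x 0 = - x 0 by rewrite -(esp_odd ex) oppr0. lia. Qed.

Lemma esp_neq0 x y : even_signed_perm x -> y != 0 -> x y != 0.
Proof. by move=> ex; apply: contra_neq; rewrite -{1}(esp0 ex) => /(esp_inj ex). Qed.

Lemma iota_split2 k : (0 < k)%N -> (k < n)%N ->
  iota 1 n = iota 1 k.-1 ++ [:: k, k.+1 & iota k.+2 (n - k.+1)].
Proof.
move=> k_gt0 k_lt; have {1}-> : n = (k.-1 + (n - k.+1).+2)%N by lia.
by rewrite iotaD /= add1n prednK.
Qed.

Lemma window_t0 x j : val j = 0%N -> exists r,
  window x = [:: x 1%:Z, x 2%:Z & r] /\
  window (x \o Dgen j) = [:: x (- 2%:Z), x (- 1%:Z) & r].
Proof.
move=> j0; rewrite /window (@iota_split2 1) //=; eexists; split; first by [].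
rewrite /Dgen j0 /=; congr [:: _, _ & _].
apply/eq_in_map => k; rewrite mem_iota /= => /andP[k_ge3 _]; split_eqs; lia.
Qed.

Lemma window_ti x j : (0 < val j)%N -> exists l r,
  window x = l ++ [:: x (val j)%:Z, x (val j).+1%:Z & r] /\
  window (x \o Dgen j) = l ++ [:: x (val j).+1%:Z, x (val j)%:Z & r].
Proof.
case: j => j j_lt /= j_gt0.
exists [seq x k%:Z | k <- iota 1 j.-1], [seq x k%:Z | k <- iota j.+2 (n - j.+1)].
rewrite /window (iota_split2 j_gt0 j_lt) !map_cat; split=> //.
rewrite /Dgen /= (gtn_eqF j_gt0); split_eqs; try lia.
congr (_ ++ [:: x _, _ & _]); try lia.
all: apply/eq_in_map => k; rewrite mem_iota => /andP[k1 k2]; split_eqs; lia.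
Qed.

Lemma esp_id : even_signed_perm id.
Proof.
split=> //; first exact: inv_bij.
by rewrite /window count_map (eq_in_count (a2 := pred0)) ?count_pred0.
Qed.

Lemma esp_step x j : even_signed_perm x -> even_signed_perm (x \o Dgen j).
Proof.
move=> ex; split.
- by move=> y /=; rewrite Dgen_opp (esp_odd ex).
- by move=> y y_gt /=; rewrite Dgen_out // (esp_out ex).
- by move=> y y_le /=; apply: (esp_norm ex); apply: Dgen_norm.
- exact: bij_comp (esp_bij ex) (inv_bij (Dgen_inv j)).
move: (esp_even ex); case: (posnP (val j)) => [j0|j_gt0].
  have [r [-> ->]] := window_t0 x j0; rewrite !(esp_odd ex) /=.
  have x1_ne0 : x 1%:Z != 0 by apply: esp_neq0.
  have x2_ne0 : x 2%:Z != 0 by apply: esp_neq0.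
  have oppr_lt0_neq0 (v : int) : v != 0 -> (- v < 0) = ~~ (v < 0).
    by move=> v_ne0; rewrite oppr_lt0 lt0r v_ne0 leNgt.
  rewrite !oppr_lt0_neq0 // !oddD !oddb.
  by case: (x 1%:Z < 0); case: (x 2%:Z < 0); case: odd.
have [l [r [-> ->]]] := window_ti x j_gt0.
by rewrite !count_cat /= !oddD; case: (_ < 0); case: (_ < 0).
Qed.

Lemma esp_word x w : even_signed_perm x -> even_signed_perm (x \o Deval w).
Proof.
move=> ex; elim/last_ind: w => [|w j IH] //.
by rewrite Deval_rcons; exact: esp_step j IH.
Qed.

Definition ascent j x : bool :=
  if val j == 0%N then 0 < x 1%:Z + x 2%:Z else x (val j)%:Z < x (val j).+1%:Z.

Definition len x := dinv (window x).

Lemma len_step x j : even_signed_perm x ->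
  (len (x \o Dgen j) + ~~ ascent j x = len x + ascent j x)%N.
Proof.
move=> ex; rewrite /len /ascent; case: (posnP (val j)) => [j0|j_gt0].
  have [r [-> ->]] := window_t0 x j0; rewrite !(esp_odd ex).
  (* [set] merges two elaborations of the same list into one atom for [lia]. *)
  have := dinv_flip (x 1%:Z) (x 2%:Z) r; set d := dinv [:: - x 2%:Z, - x 1%:Z & r].
  have /eqP : x 2%:Z != - x 1%:Z by rewrite -(esp_odd ex) (inj_eq (esp_inj ex)).
  by split_lts; lia.
have [l [r [-> ->]]] := window_ti x j_gt0.
have := dinv_swap l (x (val j)%:Z) (x (val j).+1%:Z) r.
have /eqP : x (val j)%:Z != x (val j).+1%:Z by rewrite (inj_eq (esp_inj ex)); lia.
by split_lts; lia.
Qed.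

Lemma len_id : len id = 0%N.
Proof. by rewrite /len /window dinv_increasing ?iota_ltn_sorted // mem_iota. Qed.

Lemma len_word x w : even_signed_perm x -> (len (x \o Deval w) <= len x + size w)%N.
Proof.
move=> ex; elim/last_ind: w => [|w j IH]; first by rewrite addn0.
have -> : x \o Deval (rcons w j) = (x \o Deval w) \o Dgen j by rewrite Deval_rcons.
have := len_step j (esp_word w ex); move: IH; rewrite size_rcons; case: ascent => /=; lia.
Qed.

Lemma len_Deval w : (len (Deval w) <= size w)%N.
Proof. by have := len_word w esp_id; rewrite len_id. Qed.

Lemma esp_window_id x : even_signed_perm x ->
  (forall k : nat, (1 <= k <= n)%N -> x k%:Z = k%:Z) -> x = id.
Proof.
move=> ex xk; have x_nat m : x m%:Z = m%:Z.
  case: m => [|m]; first exact: esp0.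
  by case: (leqP m.+1 n) => m_le; [apply: xk | apply: (esp_out ex)]; lia.
apply: functional_extensionality => -[m|m] //.
by rewrite NegzE (esp_odd ex) x_nat.
Qed.

Lemma ascents_id x : even_signed_perm x -> (forall j, ascent j x) -> x = id.
Proof.
move=> ex asc.
have x12 : 0 < x 1%:Z + x 2%:Z by have := asc (Ordinal (ltnW n_ge2)).
have incr k : (1 <= k < n)%N -> x k%:Z < x k.+1%:Z.
  by case/andP=> k_gt0 k_lt; have := asc (Ordinal k_lt); rewrite /ascent /= gtn_eqF.
have x_pos k : (2 <= k <= n)%N -> 0 < x k%:Z.
  elim: k => [|k IH] k_le; first by [].
  have [k_le1|k_gt1] := leqP k 1.
    have -> : k = 1%N by lia.
    by have := incr 1%N; lia.
  by have := incr k; have := IH; lia.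
have x1_pos : 0 < x 1%:Z.
  have := esp_even ex; rewrite /window (@iota_split2 1) //= count_map.
  rewrite (@eq_in_count _ _ pred0) ?count_pred0 => [|k]; last first.
    by rewrite mem_iota /= => /andP[k_ge3 k_le]; rewrite ltNge ltW // x_pos //; lia.
  have /eqP := esp_neq0 ex (isT : 1%:Z != 0); have := x_pos 2%N; split_lts; rewrite //=; lia.
apply: (esp_window_id ex); apply: (increasing_id (f := fun k => x k%:Z)) => //=.
have := esp_norm ex (y := n%:Z); rewrite ger0_norm // => /(_ (lexx _)).
by apply: le_trans; exact: ler_norm.
Qed.

Lemma word_exists x : even_signed_perm x -> exists w, Deval w = x /\ size w = len x.
Proof.
move Nx: (len x) => N; elim: N x Nx => [|N IH] x Nx ex;
  have [/forallP/(ascents_id ex) x_id|] := boolP [forall j, ascent j x];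
  try by exists [::]; rewrite -Nx x_id len_id.
all: rewrite negb_forall => /existsP[j /negPf not_asc].
all: have := len_step j ex; rewrite not_asc Nx /= => len_xj.
  by lia.
have [w [Dw size_w]] := IH (x \o Dgen j) ltac:(lia) (esp_step j ex).
exists (rcons w j); rewrite Deval_rcons Dw size_rcons size_w; split; last by lia.
by apply: functional_extensionality => y /=; rewrite Dgen_inv.
Qed.

Lemma reduced_exprE x w : even_signed_perm x ->
  reduced_expr w x <-> Deval w = x /\ size w = len x.
Proof.
move=> ex; have [w0 [Dw0 size_w0]] := word_exists ex.
split=> [[Dw w_min] | [Dw size_w]].
  have {}Dw : Deval w = x by apply: functional_extensionality.
  split=> //; apply/eqP; rewrite eqn_leq -{1}size_w0 w_min ?Dw0 //.
  by rewrite -{1}Dw len_Deval.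
split=> [y | w' Dw']; first by rewrite Dw.
by rewrite size_w -(functional_extensionality _ _ Dw') len_Deval.
Qed.

Definition tau0 (y : int) : int := if y == 1 then -1 else if y == -1 then 1 else y.

(* [parabolic i x]: x lies in the parabolic subgroup generated by S \ {t_i}.
   For i <> 1 these are the x preserving {±1..±i} and acting positively on
   i+1..n; for i = 1 it is the conjugate by tau0 = (1,-1) of the unsigned
   permutations, because tau0 t_1 tau0 = t_0 and tau0 commutes with t_2..t_(n-1). *)
Definition parabolic i x : Prop :=
  if val i == 1%N then forall k, 0 < k <= n%:Z -> 0 < tau0 (x (tau0 k))
  else forall j k : nat, (j <= i)%N -> (i < k)%N -> (k <= n)%N -> `|x j%:Z| < x k%:Z.

Lemma parabolic_id i : parabolic i id.
Proof. by rewrite /parabolic; case: eqP => _ => [k|j k] /=; rewrite /tau0; split_eqs; lia. Qed.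

Lemma Dgen_tau0 j k : val j <> 1%N -> 0 < k <= n%:Z ->
  exists2 k', 0 < k' <= n%:Z & Dgen j (tau0 k) = tau0 k'.
Proof.
case: j => [j j_lt] /= j_ne1 k_range.
have [j0|j_gt0] := posnP j.
  by exists (if k == 1 then 2 else if k == 2 then 1 else k);
    rewrite /Dgen /tau0 /=; split_eqs; lia.
by exists (Dgen (Ordinal j_lt) k); rewrite /Dgen /tau0 /=; split_eqs; lia.
Qed.

Lemma Dgen_block j (m a : nat) : val j <> m -> m <> 1%N -> (m < n)%N -> (a <= m)%N ->
  `|Dgen j a%:Z| <= m%:Z.
Proof. by case: j => [jv jv_lt] /=; rewrite /Dgen /=; split_eqs; lia. Qed.

Lemma Dgen_tail j (m k : nat) : val j <> m -> m <> 1%N -> (m < k <= n)%N ->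
  m%:Z < Dgen j k%:Z <= n%:Z.
Proof. by case: j => [jv jv_lt] /=; rewrite /Dgen /=; split_eqs; lia. Qed.

Lemma esp_norm_arg x y : even_signed_perm x -> `|x `|y| | = `|x y|.
Proof.
move=> ex; case: (lerP 0 y) => y_sign; first by rewrite (ger0_norm y_sign).
by rewrite (ltr0_norm y_sign) (esp_odd ex) normrN.
Qed.

Lemma parabolic_step i j x : even_signed_perm x -> parabolic i x -> j != i ->
  parabolic i (x \o Dgen j).
Proof.
move=> ex; rewrite /parabolic => par j_ne_i.
have {j_ne_i} : val j <> val i by move/val_inj/eqP; rewrite (negPf j_ne_i).
case: i par => [m m_lt] /= par j_ne_m.
case: eqP par => [m1|m_ne1] par.
  rewrite m1 in j_ne_m; move=> k k_range /=.
  by have [k' k'_range ->] := Dgen_tau0 j_ne_m k_range; apply: par.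
move=> a k a_le m_lt_k k_le /=.
have := Dgen_block j_ne_m m_ne1 m_lt a_le.
have := Dgen_tail j_ne_m m_ne1 (introT andP (conj m_lt_k k_le)).
rewrite -(esp_norm_arg _ ex); set b := Dgen j a%:Z; set c := Dgen j k%:Z.
move=> c_range b_le.
have -> : `|b| = (absz b)%:Z by rewrite abszE.
have -> : c = (absz c)%:Z by lia.
by apply: par; lia.
Qed.

Lemma parabolic_word i x w : even_signed_perm x -> parabolic i x -> i \notin w ->
  parabolic i (x \o Deval w).
Proof.
move=> ex par; elim/last_ind: w => [|w j IH] //.
rewrite mem_rcons in_cons negb_or => /andP[i_ne_j i_notin_w]; rewrite Deval_rcons.
by apply: parabolic_step (esp_word w ex) (IH i_notin_w) _; rewrite eq_sym.
Qed.

Lemma tau0_gt0 v : 0 < tau0 v <-> v = -1 \/ 1 < v.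
Proof. by rewrite /tau0; split_eqs; lia. Qed.

Lemma parabolic_ascent i x : even_signed_perm x -> parabolic i x -> ascent i x.
Proof.
case: i => [m m_lt] ex; rewrite /parabolic /ascent /=.
case: eqP => [->|m_ne1] par /=.
  have := par 1%:Z ltac:(lia); have := par 2%:Z ltac:(lia).
  rewrite (_ : tau0 1%:Z = - 1%:Z) // (_ : tau0 2%:Z = 2%:Z) // (esp_odd ex).
  move=> /tau0_gt0 x2 /tau0_gt0 x1.
  have /eqP : x 1%:Z != x 2%:Z by rewrite (inj_eq (esp_inj ex)).
  have /eqP : x 2%:Z != - x 1%:Z by rewrite -(esp_odd ex) (inj_eq (esp_inj ex)).
  lia.
have [m0|m_gt0] := posnP m.
  by have := par 0%N 1%N; have := par 0%N 2%N; rewrite (esp0 ex); lia.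
by have := par m m.+1; lia.
Qed.

Lemma inC_parabolic x i : even_signed_perm x -> inC x i <-> parabolic i x.
Proof.
move=> ex; split=> [notS | par [w [/(reduced_exprE _ ex) [Dw size_w] i_in_w]]].
  have [w [Dw size_w]] := word_exists ex.
  have i_notin_w : i \notin w.
    by apply/negP => i_in_w; apply: notS; exists w; rewrite (reduced_exprE _ ex).
  by rewrite -Dw; apply: parabolic_word esp_id (parabolic_id i) i_notin_w.
have [a [b [w_ab i_notin_b]]] := mem_split_last i_in_w.
pose v := x \o Deval (rev b).
have ev : even_signed_perm v := esp_word (rev b) ex.
have asc : ascent i v.
  by apply: parabolic_ascent ev (parabolic_word ex par _); rewrite mem_rev.
have vi : v \o Dgen i = Deval a.
  apply: functional_extensionality => y.
  by rewrite /v /= -Dw w_ab Deval_cat /= Deval_revK Dgen_inv.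
have vb : v \o Deval b = x.
  by apply: functional_extensionality => y; rewrite /v /= -{2}(revK b) Deval_revK.
have := len_step i ev; rewrite asc vi /= => len_a.
have := len_word b ev; rewrite vb => len_x.
by have := len_Deval a; move: size_w; rewrite w_ab size_cat /=; lia.
Qed.

Lemma window_mem x (k : nat) : (1 <= k <= n)%N -> x k%:Z \in window x.
Proof. by move=> k_range; apply: map_f; rewrite mem_iota; lia. Qed.

Lemma window_uniq x : even_signed_perm x -> uniq (window x).
Proof. by move=> ex; rewrite map_inj_uniq ?iota_uniq // => a b /(esp_inj ex) []. Qed.

Lemma card_neg_window x :
  #|[set i : 'I_n | x (i.+1)%:Z < 0]| = count (fun v => v < 0) (window x).
Proof.
rewrite cardsE cardE /enum_mem size_filter -enumT /window count_map.
by rewrite -[1%N]addn0 iotaDl -val_enum_ord !count_map.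
Qed.

Lemma parabolic1E x : even_signed_perm x ->
  (forall k, 0 < k <= n%:Z -> 0 < tau0 (x (tau0 k))) <->
  (x 1%:Z = 1 \/ x 1%:Z < -1) /\
  (forall k : nat, (2 <= k <= n)%N -> x k%:Z = -1 \/ 1 < x k%:Z).
Proof.
move=> ex; have tau0_1 : tau0 1%:Z = - 1%:Z by [].
have tau0_nat (k : nat) : (2 <= k)%N -> tau0 k%:Z = k%:Z by rewrite /tau0; split_eqs; lia.
split=> [par | [x1 xk] k k_range].
  split=> [|k k_range]; last by have := par k%:Z ltac:(lia); rewrite tau0_nat ?tau0_gt0 //; lia.
  by have := par 1%:Z ltac:(lia); rewrite tau0_1 (esp_odd ex) tau0_gt0; lia.
have [m k_m] : exists m : nat, k = m%:Z by exists (absz k); lia.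
have [m1|m_ge2] := eqVneq m 1%N.
  by rewrite k_m m1 tau0_1 (esp_odd ex) tau0_gt0; lia.
by rewrite k_m tau0_nat ?tau0_gt0; [apply: xk|..]; lia.
Qed.

Lemma parabolic1_fixed x : even_signed_perm x -> x 1%:Z = 1 ->
  (forall k : nat, (2 <= k <= n)%N -> x k%:Z = -1 \/ 1 < x k%:Z) <->
  (forall k : nat, (1 <= k <= n)%N -> 0 < x k%:Z).
Proof.
move=> ex x1; split=> [xk k k_range | pos k k_range].
  have [->|k_ne1] := eqVneq k 1%N; first by rewrite x1.
  have [xk_m1|] := xk k ltac:(lia); last lia.
  have : x k%:Z = x (- 1%:Z) by rewrite (esp_odd ex) x1.
  by move/(esp_inj ex); lia.
right; have : x k%:Z != x 1%:Z by rewrite (inj_eq (esp_inj ex)); lia.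
by rewrite x1 => /eqP; have := pos k ltac:(lia); lia.
Qed.

Lemma window_tail x : window x = x 1%:Z :: [seq x k%:Z | k <- iota 2 n.-1].
Proof. by rewrite /window -{1}(prednK (ltnW n_ge2)). Qed.

Lemma parabolic1_moved x : even_signed_perm x -> x 1%:Z < -1 ->
  (forall k : nat, (2 <= k <= n)%N -> x k%:Z = -1 \/ 1 < x k%:Z) <->
  (forall y : int, x y = 1 -> y < -1) /\ count (fun v => v < 0) (window x) = 2%N.
Proof.
move=> ex x1; split=> [xk | [pre cnt] k k_range].
  split=> [j xj|].
    case: (ltP j (-1)) => // j_ge; exfalso.
    have [j_m1|[m j_m]] : j = - 1%:Z \/ exists m : nat, j = m%:Z.
      by case: j j_ge xj => m j_ge xj; [right; exists m | left; rewrite NegzE in j_ge *; lia].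
    by move: xj; rewrite j_m1 (esp_odd ex); lia.
    move: xj; rewrite {}j_m; have [m_le|m_gt] := leqP m n; last by rewrite (esp_out ex); lia.
    have [->|m_ne0] := eqVneq m 0%N; first by rewrite (esp0 ex).
    have [->|m_ne1] := eqVneq m 1%N; first lia.
    by have := xk m ltac:(lia); lia.
  have := esp_even ex; have := window_uniq ex; rewrite window_tail /= => /andP[_ tail_uniq].
  rewrite (@eq_in_count _ _ (pred1 (- 1%:Z))) ?count_uniq_mem //.
    have -> : (x 1%:Z < 0) = true by apply/idP; lia.
    by case: (_ \in _).
  by move=> v /mapP[m]; rewrite mem_iota => m_range ->; have := xk m ltac:(lia); rewrite /=; lia.
have [xk_m1|/eqP xk_ne_m1] := eqVneq (x k%:Z) (-1); first by left.
case: (ltP 1 (x k%:Z)) => [|xk_le1]; [by right | exfalso].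
have /eqP xk_ne0 : x k%:Z != 0 by apply: (esp_neq0 ex); apply/negP => /eqP; lia.
have xk_ne1 : x k%:Z <> 1 by move/pre; lia.
have [g xg gx] := esp_bij ex.
have g1_lt := pre (g 1) (gx 1).
pose p := absz (g 1).
have xp : x p%:Z = - 1%:Z by rewrite (_ : p%:Z = - g 1) ?(esp_odd ex) ?gx //; lia.
have p_le : (p <= n)%N by case: (leqP p n) => // p_gt; move: xp; rewrite (esp_out ex); lia.
have : (3 <= count (fun v => (v < 0)%R) (window x))%N.
  rewrite -size_filter; apply: (uniq_leq_size (s1 := [:: x 1%:Z; x k%:Z; x p%:Z])).
    have /eqP x1_ne_xk : x 1%:Z != x k%:Z by rewrite (inj_eq (esp_inj ex)); apply/eqP; lia.
    by rewrite /= !inE xp; lia.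
  by move=> v; rewrite !inE mem_filter => /or3P[] /eqP ->; rewrite window_mem /=; lia.
by rewrite cnt.
Qed.

Lemma parabolic1_iff x : even_signed_perm x ->
  (forall k, 0 < k <= n%:Z -> 0 < tau0 (x (tau0 k))) <->
  (x 1 = 1 /\ (forall k : nat, (1 <= k <= n)%N -> 0 < x k%:Z)) \/
  (x 1 < -1 /\ (forall j : int, x j = 1 -> j < -1) /\
   #|[set i : 'I_n | x (i.+1)%:Z < 0]| = 2%N).
Proof.
move=> ex; rewrite parabolic1E // card_neg_window.
split=> [[[x1|x1] xk]|[[x1 pos]|[x1 moved]]].
- by left; split; last exact/(parabolic1_fixed ex x1).
- by right; split; last exact/(parabolic1_moved ex x1).
- by split; [left | exact/(parabolic1_fixed ex x1)].
- by split; [right | exact/(parabolic1_moved ex x1)].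
Qed.

Lemma inDn_esp u : inDn n u -> even_signed_perm u.
Proof.
by case=> w /functional_extensionality <-; exact: esp_word esp_id.
Qed.

End EvenSignedPermutations.

Theorem mainTheorem16 (n : nat) (u : int -> int) :
  (2 <= n)%N -> inDn n u ->
  let cond :=
    (u 1 = 1 /\ (forall k : nat, (1 <= k <= n)%N -> 0 < u k%:Z)) \/
    (u 1 < -1 /\ (forall j : int, u j = 1 -> j < -1) /\
     #|[set i : 'I_n | u (i.+1)%:Z < 0]| = 2%N) in
  let X (i : 'I_n) :=
    val i <> 1%N /\
    (forall j k : nat, (j <= i)%N -> (i < k)%N -> (k <= n)%N ->
       `|u j%:Z| < u k%:Z) in
  (cond -> forall i : 'I_n, inC u i <-> (val i = 1%N \/ X i)) /\
  (~ cond -> forall i : 'I_n, inC u i <-> X i).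
Proof.
move=> n_ge2 /(inDn_esp n_ge2) esp_u cond X.
have par1 := parabolic1_iff n_ge2 esp_u.
split=> [u_cond | not_cond] i; rewrite (inC_parabolic n_ge2 i esp_u) /parabolic /X;
  case: eqP => [i1|i_ne1].
- by split=> [_|_]; [left | exact/par1].
- by split=> [par|[//|[_ par]]]; [right|].
- by split=> [/par1|[]].
- by split=> [par|[_ par]].
Qed.
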